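(* Assume $W_c$ satisfies Assumption 1, let $k,n\ge2$ be integers, write $U:=U[W_s,W_c,\downarrow;\frac{k-1}{n-1}]$, and let $\theta_0<1$ satisfy $(1-\theta_0)U'(\theta_0)+U(\theta_0)=R$. Then \[ \log P_j(k,n)\ge\sup_{s>0,\ \theta_0<\rho<1}\frac{1+s}{s}\Big[-(n-1)\frac{U(\rho(1+s))}{1+s}+(n-1)U(\rho)+\delta_1(s,\rho)+\log\Big(1-2e^{(n-1)\left((\rho-\theta_0)U'(\theta_0)+U(\theta_0)-U(\rho)\right)+\delta_2(\rho)}\Big)\Big], \] where \[\delta_1(s,\rho):=-\frac{\overline\delta_{W_s}((1+s)\rho)+\overline\delta_{W_c}((1+s)\rho)}{1+s}+\underline\delta_{W_s}(\rho)+\underline\delta_{W_c}(\rho),\] \[\delta_2(\rho):=\frac{(1-\rho)\big(\overline\delta_{W_s}(\theta_0)+\overline\delta_{W_c}(\theta_0)\big)-(1-\theta_0)\big(\underline\delta_{W_s}(\rho)+\underline\delta_{W_c}(\rho)\big)+(\rho-\theta_0)R}{1-\theta_0}.\]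
   Context: Setup. $\mathcal M$ is a finite set and $W_s=\{W_s(m|m')\}$ an irreducible aperiodic transition matrix on $\mathcal M$; the message $M^k=(M_1,\dots,M_k)$ has law $P_{M^k}(m^k)=P_{M_1}(m_1)\prod_{i=2}^kW_s(m_i|m_{i-1})$ for some initial distribution $P_{M_1}$. $\mathcal X$ is a finite abelian group, $\mathcal Z$ a finite set, $W_c=\{W_c(x,z|x',z')\}$ an irreducible aperiodic transition matrix on $\mathcal X\times\mathcal Z$, and $(X^n,Z^n)$ has law $P_{X^nZ^n}(x^n,z^n)=P_{X_1Z_1}(x_1,z_1)\prod_{i=2}^nW_c(x_i,z_i|x_{i-1},z_{i-1})$ for an initial distribution $P_{X_1Z_1}$ with marginal $P_{Z_1}$. The channel maps input $\tilde x^n\in\mathcal X^n$ to output $(x^n,z^n)$ with probability $P_{X^nZ^n}(x^n-\tilde x^n,z^n)$. A code is $(\mathsf e,\mathsf d)$ with $\mathsf e:\mathcal M^k\to\mathcal X^n$, $\mathsf d:(\mathcal X\times\mathcal Z)^n\to\mathcal M^k$; $P_j(k,n)$ is the infimum over codes of $\sum_{m^k}P_{M^k}(m^k)\Pr[\mathsf d(\text{output})\ne m^k\mid\text{input }\mathsf e(m^k)]$. $R:=\log|\mathcal X|$. Convention $\log t:=-\infty$ for $t\le0$. Assumption 1: $\sum_xW_c(x,z|x',z')$ does not depend on $x'$; call it $W_{c,Z}(z|z')$. Perron–Frobenius notation: entrywise powers $a^t$ of transition probabilities are taken to be $0$ when $a=0$. For a nonnegative irreducible matrix $A$ indexed by a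 finite set, $\lambda(A)$ is its Perron–Frobenius eigenvalue and $v_A$ the positive vector with $\sum_iv_A(i)A(i,j)=\lambda(A)v_A(j)$ for all $j$, normalized so $\min_iv_A(i)=1$. Quantities. $A^s_\theta(m,m'):=W_s(m|m')^{1-\theta}$; $A^c_\theta((x,z),(x',z')):=W_c(x,z|x',z')^{1-\theta}W_{c,Z}(z|z')^{\theta}$. $\theta H^{W_s}_{1-\theta}(M):=\log\lambda(A^s_\theta)$, $\theta H^{W_c,\downarrow}_{1-\theta}(X|Z):=\log\lambda(A^c_\theta)$. For $r>0$: $U[W_s,W_c,\downarrow;r](\theta):=r\theta H^{W_s}_{1-\theta}(M)+\theta H^{W_c,\downarrow}_{1-\theta}(X|Z)$. With $w^s_\theta(m):=P_{M_1}(m)^{1-\theta}$ and $w^c_\theta(x,z):=P_{X_1Z_1}(x,z)^{1-\theta}P_{Z_1}(z)^{\theta}$: $\overline\delta_{W_s}(\theta):=\log(v_{A^s_\theta}\cdot w^s_\theta)$, $\underline\delta_{W_s}(\theta):=\overline\delta_{W_s}(\theta)-\log\max_mv_{A^s_\theta}(m)$, $\overline\delta_{W_c}(\theta):=\log(v_{A^c_\theta}\cdot w^c_\theta)$, $\underline\delta_{W_c}(\theta):=\overline\delta_{W_c}(\theta)-\log\max_{x,z}v_{A^c_\theta}(x,z)$. *)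

From HB Require Import structures.
From mathcomp Require Import all_boot all_order all_algebra.
From Stdlib Require Import Reals ClassicalEpsilon.
Set Implicit Arguments. Unset Strict Implicit. Unset Printing Implicit Defensive.
Local Open Scope R_scope.

Definition rsum (T : finType) (F : T -> R) : R := \big[Rplus/0]_(i : T) F i.
Definition rmax (T : finType) (F : T -> R) : R := \big[Rmax/0]_(i : T) F i.

(* a^t with the convention a^t := 0 when a <= 0 (used for a = 0) *)
Definition rpow0 (a t : R) : R := if Rlt_dec 0 a then Rpower a t else 0.

Fixpoint mpow (T : finType) (A : T -> T -> R) (N : nat) (i j : T) : R :=
  match N with
  | O => if i == j then 1 else 0
  | S N' => rsum (fun l => A i l * mpow A N' l j)
  end.

(* W i j = W(i|j): transition probability from j to i *)
Definition stochastic (T : finType) (W : T -> T -> R) : Prop :=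
  (forall i j, 0 <= W i j) /\ (forall j, rsum (fun i => W i j) = 1).
Definition distribution (T : finType) (P : T -> R) : Prop :=
  (forall i, 0 <= P i) /\ rsum P = 1.
Definition irreducible (T : finType) (A : T -> T -> R) : Prop :=
  forall i j, exists N : nat, (leq 1 N : Prop) /\ 0 < mpow A N i j.
Definition aperiodic (T : finType) (A : T -> T -> R) : Prop :=
  forall (i : T) (d : nat),
    (forall N : nat, (leq 1 N : Prop) -> 0 < mpow A N i i -> (dvdn d N : Prop)) -> d = 1%nat.

Definition is_PF (T : finType) (A : T -> T -> R) (lam : R) (v : T -> R) : Prop :=
  0 < lam /\ (forall i, 1 <= v i) /\ (exists i, v i = 1) /\
  (forall j, rsum (fun i => v i * A i j) = lam * v j).
Definition PF_pair (T : finType) (A : T -> T -> R) : R * (T -> R) :=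
  epsilon (inhabits (0, fun _ => 0)) (fun p => is_PF A p.1 p.2).
Definition PF_eig (T : finType) (A : T -> T -> R) : R := (PF_pair A).1.
Definition PF_vec (T : finType) (A : T -> T -> R) : T -> R := (PF_pair A).2.

Fixpoint chainp (T : Type) (W : T -> T -> R) (prev : T) (s : seq T) : R :=
  match s with
  | [::] => 1
  | y :: r => W y prev * chainp W y r
  end.
Definition mprob (T : Type) (P1 : T -> R) (W : T -> T -> R) (s : seq T) : R :=
  match s with
  | [::] => 1
  | x :: r => P1 x * chainp W x r
  end.

Section Source.
Variables (M : finType) (Ws : M -> M -> R) (PM1 : M -> R).
Definition As (th : R) : M -> M -> R := fun m m' => rpow0 (Ws m m') (1 - th).
(* theta H^{W_s}_{1-theta}(M) *)
Definition thHs (th : R) : R := ln (PF_eig (As th)).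
Definition ws (th : R) (m : M) : R := rpow0 (PM1 m) (1 - th).
Definition dbar_s (th : R) : R := ln (rsum (fun m => PF_vec (As th) m * ws th m)).
Definition dund_s (th : R) : R := dbar_s th - ln (rmax (PF_vec (As th))).
End Source.

Section Chan.
Variables (X : finZmodType) (Z : finType) (Wc : (X * Z)%type -> (X * Z)%type -> R)
          (PXZ1 : (X * Z)%type -> R).
Definition assumption1 : Prop :=
  forall (z z' : Z) (x1 x2 : X),
    rsum (fun x : X => Wc (x, z) (x1, z')) = rsum (fun x : X => Wc (x, z) (x2, z')).
Definition WcZ (z z' : Z) : R := rsum (fun x : X => Wc (x, z) (GRing.zero : X, z')).
Definition Ac (th : R) : (X * Z)%type -> (X * Z)%type -> R :=
  fun y y' => rpow0 (Wc y y') (1 - th) * rpow0 (WcZ y.2 y'.2) th.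
(* theta H^{W_c, down}_{1-theta}(X|Z) *)
Definition thHc (th : R) : R := ln (PF_eig (Ac th)).
Definition PZ1 (z : Z) : R := rsum (fun x : X => PXZ1 (x, z)).
Definition wc (th : R) (y : (X * Z)%type) : R :=
  rpow0 (PXZ1 y) (1 - th) * rpow0 (PZ1 y.2) th.
Definition dbar_c (th : R) : R := ln (rsum (fun y => PF_vec (Ac th) y * wc th y)).
Definition dund_c (th : R) : R := dbar_c th - ln (rmax (PF_vec (Ac th))).
(* additive noise: output x^n minus input x~^n, together with z^n *)
Definition noise (xt : seq X) (y : seq (X * Z)) : seq (X * Z) :=
  [seq (GRing.add p.2.1 (GRing.opp p.1), p.2.2) | p <- zip xt y].
End Chan.

Definition Ufun (M : finType) (Ws : M -> M -> R) (X : finZmodType) (Z : finType)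
  (Wc : (X * Z)%type -> (X * Z)%type -> R) (r th : R) : R :=
  r * thHs Ws th + thHc Wc th.

Definition err_prob (M : finType) (Ws : M -> M -> R) (PM1 : M -> R)
  (X : finZmodType) (Z : finType) (Wc : (X * Z)%type -> (X * Z)%type -> R)
  (PXZ1 : (X * Z)%type -> R) (k n : nat)
  (e : k.-tuple M -> n.-tuple X) (d : n.-tuple (X * Z) -> k.-tuple M) : R :=
  rsum (fun mk : k.-tuple M =>
    mprob PM1 Ws mk *
    rsum (fun y : n.-tuple (X * Z) =>
      mprob PXZ1 Wc (noise (e mk) y) * (if d y == mk then 0 else 1))).

Definition delta1 (M : finType) (Ws : M -> M -> R) (PM1 : M -> R)
  (X : finZmodType) (Z : finType) (Wc : (X * Z)%type -> (X * Z)%type -> R)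
  (PXZ1 : (X * Z)%type -> R) (s rho : R) : R :=
  - (dbar_s Ws PM1 ((1 + s) * rho) + dbar_c Wc PXZ1 ((1 + s) * rho)) / (1 + s)
  + dund_s Ws PM1 rho + dund_c Wc PXZ1 rho.

Definition delta2 (M : finType) (Ws : M -> M -> R) (PM1 : M -> R)
  (X : finZmodType) (Z : finType) (Wc : (X * Z)%type -> (X * Z)%type -> R)
  (PXZ1 : (X * Z)%type -> R) (Rate th0 rho : R) : R :=
  ((1 - rho) * (dbar_s Ws PM1 th0 + dbar_c Wc PXZ1 th0)
   - (1 - th0) * (dund_s Ws PM1 rho + dund_c Wc PXZ1 rho)
   + (rho - th0) * Rate) / (1 - th0).

From HB Require Import structures.
From mathcomp Require Import all_boot all_order all_algebra.
From Stdlib Require Import Reals Lra Lia ClassicalEpsilon.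
Set Implicit Arguments. Unset Strict Implicit. Unset Printing Implicit Defensive.
Open Scope R_scope.

(* Fix a code (e, d) and weigh each pair p = (message, output) by the tilted
   weight Q_th(p) = P(p)^(1-th) Q_Z(p)^th, where P is the joint law of message
   and output and Q_Z is the Z-marginal chain of the output, which ignores the
   X-component.  The mass of Q_th factors into a source and a channel sum over
   Markov paths; both grow like the Perron-Frobenius eigenvalue of the tilted
   transition matrix, up to the prefactors dbar and dund.  The eigenvector itself
   comes from power iteration on a positive matrix (a sum of powers of the
   irreducible one), which contracts the oscillation of the growth ratios.
   Since d picks one message per output, Q_Z has mass |X|^n on the correctly
   decoded pairs; cutting them at the threshold Q_rho <= c Q_Z and bounding the
   rest by the mass at th0 (this is where the tangent condition defining th0
   enters) shows that they carry at most 2 e^E of the mass at rho.  The erroneous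
   pairs thus carry at least (1 - 2 e^E) times that mass, and Hoelder's inequality
   with exponents 1 + s and (1 + s)/s bounds their mass by the mass at rho (1 + s)
   to the power 1/(1 + s) times P_err to the power s/(1 + s). *)

Lemma RplusA : associative Rplus. Proof. by move=> a b c; ring. Qed.
Lemma Rplus0r : left_id 0 Rplus. Proof. by move=> a; ring. Qed.
Lemma RplusC : commutative Rplus. Proof. by move=> a b; ring. Qed.
HB.instance Definition _ := Monoid.isComLaw.Build R 0 Rplus RplusA RplusC Rplus0r.

Section FiniteSums.
Variable T : finType.
Implicit Types F G : T -> R.

Lemma eq_rsum F G : (forall i, F i = G i) -> rsum F = rsum G.
Proof. by move=> H; apply: eq_bigr => i _. Qed.

Lemma rsum_le F G : (forall i, F i <= G i) -> rsum F <= rsum G.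
Proof.
move=> H; rewrite /rsum; elim: (index_enum T) => [|x s IH]; first by rewrite !big_nil; lra.
by rewrite !big_cons; have := H x; lra.
Qed.

Lemma rsum0 : rsum (fun _ : T => 0) = 0.
Proof. by rewrite /rsum big1. Qed.

Lemma rsum_ge0 F : (forall i, 0 <= F i) -> 0 <= rsum F.
Proof. by move=> H; rewrite -rsum0; apply: rsum_le. Qed.

Lemma rsumD F G : rsum (fun i => F i + G i) = rsum F + rsum G.
Proof. by rewrite /rsum big_split. Qed.

Lemma rsumMl c F : rsum (fun i => c * F i) = c * rsum F.
Proof.
rewrite /rsum; elim: (index_enum T) => [|x s IH]; first by rewrite !big_nil; ring.
by rewrite !big_cons IH; ring.
Qed.

Lemma rsumMr c F : rsum (fun i => F i * c) = rsum F * c.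
Proof. by rewrite Rmult_comm -rsumMl; apply: eq_rsum => i; ring. Qed.

Lemma rsumB F G : rsum (fun i => F i - G i) = rsum F - rsum G.
Proof.
rewrite (eq_rsum (G := fun i => F i + (-1) * G i)); last by move=> i; ring.
by rewrite rsumD rsumMl; ring.
Qed.

Lemma rsum_ge_term F i : (forall j, 0 <= F j) -> F i <= rsum F.
Proof.
move=> H; rewrite /rsum (bigD1 i) //=.
suff : 0 <= \big[Rplus/0]_(j | j != i) F j by lra.
by elim/big_rec: _ => [|j x _ Hx]; [lra | have := H j; lra].
Qed.

Lemma rsum_gt0 F i : (forall j, 0 <= F j) -> 0 < F i -> 0 < rsum F.
Proof. by move=> H Hi; have := rsum_ge_term i H; lra. Qed.

Lemma rsum_gt0_ex F : 0 < rsum F -> exists i, 0 < F i.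
Proof.
move=> H; apply: NNPP => Hn.
suff : rsum F <= rsum (fun _ : T => 0) by rewrite rsum0; lra.
by apply: rsum_le => i; apply: Rnot_lt_le => Hi; apply: Hn; exists i.
Qed.

Lemma rsum_const c : rsum (fun _ : T => c) = INR #|T| * c.
Proof.
rewrite /rsum big_const; elim: #|T| => [|m IH]; first by rewrite /=; ring.
by rewrite iterS IH S_INR; ring.
Qed.

Lemma rsum_swap (U : finType) (F : T -> U -> R) :
  rsum (fun i => rsum (fun j => F i j)) = rsum (fun j => rsum (fun i => F i j)).
Proof. exact: exchange_big. Qed.

Lemma rsum_pair (U : finType) (F : T * U -> R) :
  rsum F = rsum (fun i => rsum (fun j => F (i, j))).
Proof. by rewrite /rsum pair_big /=; apply: eq_bigr => -[]. Qed.

Lemma rsum_reindex (h : T -> T) F : injective h -> rsum (fun i => F (h i)) = rsum F.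
Proof. by move=> inj_h; rewrite /rsum [RHS](reindex_inj inj_h). Qed.

Lemma rsum_delta F j : rsum (fun i => if i == j then F i else 0) = F j.
Proof. by rewrite /rsum (bigD1 j) //= eqxx big1 ?Rplus_0_r // => i /negbTE ->. Qed.

Lemma ex_argmin (x0 : T) F : exists i, forall j, F i <= F j.
Proof.
suff [i [_ Hi]] : exists i, i \in x0 :: enum T /\ forall j, j \in x0 :: enum T -> F i <= F j.
  by exists i => j; apply: Hi; rewrite inE mem_enum orbT.
elim: (enum T) x0 => [|y s IH] x.
  by exists x; split=> [|j]; rewrite ?inE ?eqxx // => /eqP ->; lra.
have [i [Hi Hm]] := IH y.
have [Hx | Hx] := Rle_dec (F x) (F i).
  exists x; split=> [|j]; first by rewrite inE eqxx.
  by rewrite inE => /orP [/eqP -> | /Hm]; lra.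
exists i; split=> [|j]; first by rewrite inE Hi orbT.
by rewrite inE => /orP [/eqP -> | /Hm]; lra.
Qed.

Lemma ex_argmax (x0 : T) F : exists i, forall j, F j <= F i.
Proof. by have [i Hi] := ex_argmin x0 (fun j => - F j); exists i => j; have := Hi j; lra. Qed.

Lemma rmax_ge F i : F i <= rmax F.
Proof.
rewrite /rmax; have : i \in index_enum T by rewrite /index_enum -enumT mem_enum.
elim: (index_enum T) => [//|x s IH]; rewrite inE big_cons => /orP [/eqP -> | /IH H].
  exact: Rmax_l.
by apply: Rle_trans H _; apply: Rmax_r.
Qed.
End FiniteSums.

Lemma rpow0_ge0 a t : 0 <= rpow0 a t.
Proof. by rewrite /rpow0; case: Rlt_dec => ? /=; [apply: Rlt_le; exact: exp_pos | lra]. Qed.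

Lemma rpow0E a t : 0 < a -> rpow0 a t = exp (t * ln a).
Proof. by rewrite /rpow0; case: Rlt_dec. Qed.

Lemma rpow0_gt0 a t : 0 < a -> 0 < rpow0 a t.
Proof. by move=> Ha; rewrite rpow0E //; apply: exp_pos. Qed.

Lemma rpow0_le0 a t : a <= 0 -> rpow0 a t = 0.
Proof. by move=> Ha; rewrite /rpow0; case: Rlt_dec => //= ?; lra. Qed.

Lemma rpow0_gt0_base a t : 0 < rpow0 a t -> 0 < a.
Proof. by rewrite /rpow0; case: Rlt_dec => //= ?; lra. Qed.

Lemma rpow0_1 t : rpow0 1 t = 1.
Proof. by rewrite rpow0E ?ln_1 ?Rmult_0_r ?exp_0 //; lra. Qed.

Lemma rpow0M a b t : 0 <= a -> 0 <= b -> rpow0 (a * b) t = rpow0 a t * rpow0 b t.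
Proof.
move=> Ha Hb.
have [Ha0 | <-] := Rle_lt_or_eq_dec _ _ Ha; last by rewrite Rmult_0_l !(@rpow0_le0 0); lra.
have [Hb0 | <-] := Rle_lt_or_eq_dec _ _ Hb; last by rewrite Rmult_0_r !(@rpow0_le0 0); lra.
rewrite !rpow0E ?ln_mult -?exp_plus; try nra.
by congr exp; ring.
Qed.

Lemma exp_le x y : x <= y -> exp x <= exp y.
Proof. by case=> [/exp_increasing | ->]; lra. Qed.

Lemma ln_le x y : 0 < x -> x <= y -> ln x <= ln y.
Proof. by move=> Hx [/(ln_increasing _ _ Hx) | ->]; lra. Qed.

Lemma ln_div x y : 0 < x -> 0 < y -> ln (x / y) = ln x - ln y.
Proof.
move=> Hx Hy; have Hy' := Rinv_0_lt_compat _ Hy.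
by rewrite /Rdiv ln_mult ?ln_Rinv //; ring.
Qed.

Lemma Rle_divl a b c : 0 < c -> a <= b * c -> a / c <= b.
Proof.
by move=> Hc H; apply: (Rmult_le_reg_r c) => //; rewrite /Rdiv Rmult_assoc Rinv_l; lra.
Qed.

Lemma Rle_divr a b c : 0 < c -> b * c <= a -> b <= a / c.
Proof.
by move=> Hc H; apply: (Rmult_le_reg_r c) => //; rewrite /Rdiv Rmult_assoc Rinv_l; lra.
Qed.

Lemma rpow0_le a b t : 0 <= a -> a <= b -> 0 <= t -> rpow0 a t <= rpow0 b t.
Proof.
move=> Ha Hab Ht; have [Ha0 | <-] := Rle_lt_or_eq_dec _ _ Ha; last first.
  by rewrite (@rpow0_le0 0); [apply: rpow0_ge0 | lra].
rewrite !rpow0E; try lra.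
by apply/exp_le/Rmult_le_compat_l/ln_le.
Qed.

Section MarkovMass.
Variable T : finType.
Implicit Types (w : T -> R) (W : T -> T -> R).

Lemma chainp_ge0 W p s : (forall a b, 0 <= W a b) -> 0 <= chainp W p s.
Proof.
move=> W_ge0; elim: s p => [|y s IH] p /=; first lra.
exact: Rmult_le_pos.
Qed.

Lemma mprob_ge0 w W s :
  (forall a, 0 <= w a) -> (forall a b, 0 <= W a b) -> 0 <= mprob w W s.
Proof.
move=> w_ge0 W_ge0; case: s => [|x s] /=; first lra.
exact/Rmult_le_pos/chainp_ge0.
Qed.

Lemma mprob_rpow0 w W s t : (forall a, 0 <= w a) -> (forall a b, 0 <= W a b) ->
  rpow0 (mprob w W s) t = mprob (fun a => rpow0 (w a) t) (fun a b => rpow0 (W a b) t) s.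
Proof.
move=> w_ge0 W_ge0.
have chainE p r : rpow0 (chainp W p r) t = chainp (fun a b => rpow0 (W a b) t) p r.
  elim: r p => [|y r IH] p /=; first exact: rpow0_1.
  by rewrite rpow0M ?IH //; apply: chainp_ge0.
case: s => [|x s] /=; first exact: rpow0_1.
by rewrite rpow0M ?chainE //; apply: chainp_ge0.
Qed.

Lemma mprobM (w1 w2 : T -> R) (f g : T -> T -> R) s :
  mprob (fun a => w1 a * w2 a) (fun a b => f a b * g a b) s = mprob w1 f s * mprob w2 g s.
Proof.
have chainM p r : chainp (fun a b => f a b * g a b) p r = chainp f p r * chainp g p r.
  by elim: r p => [|y r IH] p /=; rewrite ?IH; ring.
by case: s => [|x s] /=; rewrite ?chainM; ring.
Qed.

Lemma rsum_tuple_cons N (F : N.+1.-tuple T -> R) :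
  rsum F = rsum (fun x => rsum (fun t : N.-tuple T => F [tuple of x :: t])).
Proof.
rewrite -(rsum_pair (fun p : T * N.-tuple T => F [tuple of p.1 :: p.2])).
rewrite /rsum (reindex (fun p : T * N.-tuple T => [tuple of p.1 :: p.2])) //.
apply: onW_bij; exists (fun u : N.+1.-tuple T => (thead u, [tuple of behead u])).
  by move=> [x t] /=; rewrite theadE; congr pair; apply: val_inj.
by move=> u /=; rewrite [RHS]tuple_eta.
Qed.

Definition chain_mass W N p := rsum (fun t : N.-tuple T => chainp W p t).

Lemma chain_mass0 W p : chain_mass W 0 p = 1.
Proof.
rewrite /chain_mass (eq_rsum (G := fun _ => 1)) => [|t]; last by rewrite tuple0.
by rewrite rsum_const card_tuple expn0 /=; ring.
Qed.

Lemma chain_massS W N p : chain_mass W N.+1 p = rsum (fun y => W y p * chain_mass W N y).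
Proof. by rewrite /chain_mass rsum_tuple_cons; apply: eq_rsum => y; rewrite rsumMl. Qed.

Lemma rsum_mprob w W N :
  rsum (fun t : N.+1.-tuple T => mprob w W t) = rsum (fun x => w x * chain_mass W N x).
Proof. by rewrite rsum_tuple_cons; apply: eq_rsum => x; rewrite /chain_mass rsumMl. Qed.

Section PerronFrobeniusMass.
Variables (A : T -> T -> R) (lam : R) (v : T -> R).
Hypotheses (A_ge0 : forall a b, 0 <= A a b) (PF : is_PF A lam v).

Lemma chain_mass_PF_le N p : chain_mass A N p <= lam ^ N * v p.
Proof.
have [_ [v_ge1 [_ eig]]] := PF.
elim: N p => [|N IH] p; first by rewrite chain_mass0 /=; have := v_ge1 p; lra.
rewrite chain_massS; apply: (Rle_trans _ (rsum (fun y => lam ^ N * (v y * A y p)))).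
  by apply: rsum_le => y; have := IH y; have := A_ge0 y p; nra.
by rewrite rsumMl eig /=; lra.
Qed.

Lemma chain_mass_PF_ge N p : lam ^ N * v p / rmax v <= chain_mass A N p.
Proof.
have [_ [v_ge1 [_ eig]]] := PF.
have vmax : 0 < rmax v by have := rmax_ge v p; have := v_ge1 p; lra.
elim: N p => [|N IH] p.
  by rewrite chain_mass0; apply: Rle_divl => //; have := rmax_ge v p; lra.
rewrite chain_massS; apply: (Rle_trans _ (rsum (fun y => lam ^ N / rmax v * (v y * A y p)))).
  by rewrite rsumMl eig /=; right; field; lra.
apply: rsum_le => y; have := IH y; have := A_ge0 y p.
by rewrite /Rdiv; nra.
Qed.

Lemma mprob_mass_bounds w N : (forall a, 0 <= w a) -> 0 < rsum (fun x => v x * w x) ->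
  let S := rsum (fun t : N.+1.-tuple T => mprob w A t) in
  let V := rsum (fun x => v x * w x) in
  0 < S /\ ln S <= INR N * ln lam + ln V /\ INR N * ln lam + ln V - ln (rmax v) <= ln S.
Proof.
move=> w_ge0 V_gt0 S V; rewrite -/V in V_gt0; have [lam_gt0 [v_ge1 [[i1 _] _]]] := PF.
have vmax : 0 < rmax v by have := rmax_ge v i1; have := v_ge1 i1; lra.
have lamN : 0 < lam ^ N by apply: pow_lt.
have up : S <= lam ^ N * V.
  rewrite /S rsum_mprob /V -rsumMl; apply: rsum_le => x.
  by have := chain_mass_PF_le N x; have := w_ge0 x; nra.
have lo : lam ^ N * V / rmax v <= S.
  rewrite /S rsum_mprob /V /Rdiv -rsumMl -rsumMr; apply: rsum_le => x.
  have := chain_mass_PF_ge N x; have := w_ge0 x; rewrite /Rdiv; nra.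
have lo_gt0 : 0 < lam ^ N * V / rmax v by apply: Rdiv_lt_0_compat; nra.
have lnV : ln (lam ^ N * V) = INR N * ln lam + ln V by rewrite ln_mult ?ln_pow.
split; first lra; split.
  by rewrite -lnV; apply: ln_le; lra.
by rewrite -lnV -ln_div; [apply: ln_le | nra | lra].
Qed.
End PerronFrobeniusMass.
End MarkovMass.

Lemma cv_const c : Un_cv (fun _ => c) c.
Proof. by move=> eps eps_gt0; exists 0%nat => t _; rewrite /R_dist Rminus_diag Rabs_R0. Qed.

Lemma cv_geometric_increments (u : nat -> R) G q : 0 <= q < 1 ->
  (forall t, Rabs (u t.+1 - u t) <= G * q ^ t) -> {l | Un_cv u l}.
Proof.
move=> q01 du; pose d t := u t.+1 - u t.
have geom : {l | Un_cv (sum_f_R0 (fun t => G * q ^ t)) l}.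
  exists (G * / (1 - q)).
  apply: (Un_cv_ext (fun N => G * sum_f_R0 (fun t => 1 * q ^ t) N)).
    by move=> N; rewrite scal_sum; apply: sum_eq => t _; ring.
  apply: CV_mult; first exact: cv_const.
  by apply: GP_infinite; rewrite Rabs_right; lra.
have [l cv] := cv_cauchy_2 _ (cauchy_abs _ (cv_cauchy_1 _
  (Rseries_CV_comp (fun t => Rabs (d t)) _ (fun t => conj (Rabs_pos _) (du t)) geom))).
have tele N : u O + sum_f_R0 d N = u (N + 1)%nat.
  rewrite addn1; elim: N => [|N IH] /=; first by rewrite /d; ring.
  by rewrite -Rplus_assoc IH /d; ring.
exists (u O + l); apply: (CV_shift u 1).
by apply: (Un_cv_ext _ _ tele); apply: CV_plus; [exact: cv_const | exact: cv].
Qed.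

Section WeightedSums.
Variable T : finType.

Lemma cv_rsum (u : nat -> T -> R) (l c : T -> R) :
  (forall i, Un_cv (fun t => u t i) (l i)) ->
  Un_cv (fun t => rsum (fun i => u t i * c i)) (rsum (fun i => l i * c i)).
Proof.
move=> cv_u; rewrite /rsum; elim: (index_enum T) => [|x s IH].
  by apply: (Un_cv_ext (fun _ => 0)) => [t|]; rewrite big_nil //; apply: cv_const.
rewrite big_cons; apply: (Un_cv_ext (fun t => u t x * c x + \big[Rplus/0]_(i <- s) (u t i * c i))).
  by move=> t; rewrite big_cons.
by apply: CV_plus => //; apply: CV_mult => //; apply: cv_const.
Qed.

Lemma wavg_diff_le (x0 : T) (a b m r : T -> R) kap D :
  (forall i, m i <= a i) -> (forall i, m i <= b i) ->
  rsum a = 1 -> rsum b = 1 -> rsum m = kap -> (forall i i', r i - r i' <= D) ->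
  rsum (fun i => a i * r i) - rsum (fun i => b i * r i) <= (1 - kap) * D.
Proof.
move=> ma mb Sa Sb Sm osc; have [i0 r_min] := ex_argmin x0 r.
have E : rsum (fun i => (a i - m i) * (r i - r i0)) - rsum (fun i => (b i - m i) * (r i - r i0))
        = rsum (fun i => a i * r i) - rsum (fun i => b i * r i) - r i0 * (rsum a - rsum b).
  by rewrite -!rsumB -rsumMl -rsumB; apply: eq_rsum => i; ring.
rewrite Sa Sb in E.
have : 0 <= rsum (fun i => (b i - m i) * (r i - r i0)).
  by apply: rsum_ge0 => i; have := mb i; have := r_min i; nra.
have : rsum (fun i => (a i - m i) * (r i - r i0)) <= rsum (fun i => (a i - m i) * D).
  by apply: rsum_le => i; have := ma i; have := r_min i; have := osc i i0; nra.
by rewrite rsumMr rsumB Sa Sm; lra.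
Qed.
End WeightedSums.

Section PositiveMatrix.
Variables (T : finType) (C : T -> T -> R).

Definition vecmul (u : T -> R) j := rsum (fun i => u i * C i j).

Lemma vecmulZ c u j : vecmul (fun i => c * u i) j = c * vecmul u j.
Proof. by rewrite /vecmul -rsumMl; apply: eq_rsum => i; ring. Qed.

Variables (j0 : T) (cmin cmax : R).
Hypotheses (cmin_gt0 : 0 < cmin) (C_bounds : forall i j, cmin <= C i j <= cmax).

Fixpoint power_iter t : T -> R :=
  if t is t'.+1 then fun j => vecmul (power_iter t') j / vecmul (power_iter t') j0
  else fun _ => 1.

Definition growth_ratio t j := vecmul (power_iter t) j / power_iter t j.

Let kap := cmin / cmax.

Let cmax_gt0 : 0 < cmax.
Proof. by have := C_bounds j0 j0; lra. Qed.

Let kap_gt0 : 0 < kap.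
Proof. exact: Rdiv_lt_0_compat. Qed.

Let kap_le1 : kap <= 1.
Proof. by apply: Rle_divl => //; have := C_bounds j0 j0; lra. Qed.

Lemma vecmul_bounds u j : (forall i, 0 <= u i) -> cmin * rsum u <= vecmul u j <= cmax * rsum u.
Proof.
move=> u_ge0; rewrite /vecmul -!rsumMl; split; apply: rsum_le => i;
  by have := u_ge0 i; have := C_bounds i j; nra.
Qed.

Lemma vecmul_gt0 u j : (forall i, 0 < u i) -> 0 < vecmul u j.
Proof.
move=> u_gt0; have [H _] := vecmul_bounds j (fun i => Rlt_le _ _ (u_gt0 i)).
by have := rsum_gt0 (fun i => Rlt_le _ _ (u_gt0 i)) (u_gt0 j); nra.
Qed.

Lemma power_iter_gt0 t i : 0 < power_iter t i.
Proof. by elim: t i => [|t IH] i /=; [lra | apply/Rdiv_lt_0_compat; apply: vecmul_gt0]. Qed.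

Lemma power_iter_j0 t : power_iter t j0 = 1.
Proof.
by case: t => //= t; apply: Rdiv_diag; apply: Rgt_not_eq; apply/vecmul_gt0/power_iter_gt0.
Qed.

Lemma power_iter_bounds t i : kap <= power_iter t i <= / kap.
Proof.
have ikap : 1 <= / kap by rewrite -Rinv_1; apply: Rinv_le_contravar.
case: t => [|t] /=; first lra.
have u_ge0 l : 0 <= power_iter t l by apply/Rlt_le/power_iter_gt0.
have S_gt0 : 0 < rsum (power_iter t) by apply: (rsum_gt0 (i := i)) => //; apply: power_iter_gt0.
have [lo_i up_i] := vecmul_bounds i u_ge0; have [lo_0 up_0] := vecmul_bounds j0 u_ge0.
have kap_cmax : kap * cmax = cmin by rewrite /kap; field; lra.
have ikap_cmin : / kap * cmin = cmax by rewrite /kap; field; lra.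
split; [apply: Rle_divr | apply: Rle_divl]; try exact/vecmul_gt0/power_iter_gt0; nra.
Qed.

Lemma growth_ratioS t j : growth_ratio t.+1 j =
  rsum (fun i => power_iter t i * C i j / vecmul (power_iter t) j * growth_ratio t i).
Proof.
set u := power_iter t; have u_gt0 l : 0 < u l by apply: power_iter_gt0.
have uC_gt0 l : 0 < vecmul u l by apply: vecmul_gt0.
have num : vecmul (fun l => vecmul u l / vecmul u j0) j
            = / vecmul u j0 * rsum (fun i => vecmul u i * C i j).
  by rewrite -rsumMl; apply: eq_rsum => i; rewrite /Rdiv; ring.
have rhs : rsum (fun i => u i * C i j / vecmul u j * (vecmul u i / u i))
            = / vecmul u j * rsum (fun i => vecmul u i * C i j).
  by rewrite -rsumMl; apply: eq_rsum => i; have := u_gt0 i; have := uC_gt0 j => ? ?; field; lra.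
rewrite /growth_ratio /= -/u num rhs; have := uC_gt0 j; have := uC_gt0 j0 => ? ?.
by field; lra.
Qed.

(* The ratios at [t.+1] are averages of those at [t] under weights that share
   mass [kap], so [wavg_diff_le] contracts their oscillation by [1 - kap]. *)
Lemma growth_ratio_osc t j k :
  growth_ratio t j - growth_ratio t k <= INR #|T| * cmax * (1 - kap) ^ t.
Proof.
elim: t j k => [|t IH] j k.
  rewrite /growth_ratio (_ : power_iter 0 = fun _ => 1) // !Rdiv_1_r pow_O Rmult_1_r.
  have k_ge0 : 0 <= vecmul (fun _ => 1) k by apply: rsum_ge0 => i; have := C_bounds i k; lra.
  have j_le : vecmul (fun _ => 1) j <= INR #|T| * cmax.
    by rewrite -rsum_const; apply: rsum_le => i; have := C_bounds i j; lra.
  lra.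
set u := power_iter t; have u_gt0 l : 0 < u l by apply: power_iter_gt0.
have S_gt0 : 0 < rsum u by apply: (rsum_gt0 (i := j)) => // l; apply: Rlt_le.
pose w l i := u i * C i l / vecmul u l.
have w_sum l : rsum (w l) = 1.
  rewrite /w (eq_rsum (G := fun i => / vecmul u l * (u i * C i l))) => [|i]; last by rewrite /Rdiv; ring.
  by rewrite rsumMl; apply: Rinv_l; apply/Rgt_not_eq/vecmul_gt0.
have w_ge l i : u i * (cmin / (cmax * rsum u)) <= w l i.
  have [_ up] := vecmul_bounds l (fun i => Rlt_le _ _ (u_gt0 i)).
  have := u_gt0 i; have := C_bounds i l; have := vecmul_gt0 l u_gt0 => ? ? ?.
  rewrite /w /Rdiv -Rmult_assoc; apply: Rmult_le_compat; try nra.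
    by apply/Rlt_le/Rinv_0_lt_compat; nra.
  by apply: Rinv_le_contravar.
rewrite !growth_ratioS -/u.
have -> : INR #|T| * cmax * (1 - kap) ^ t.+1 = (1 - kap) * (INR #|T| * cmax * (1 - kap) ^ t).
  by rewrite -tech_pow_Rmult; ring.
apply: (wavg_diff_le j0 (w_ge j) (w_ge k) (w_sum j) (w_sum k)) => [|i i']; last exact: IH.
by rewrite rsumMr /kap; field; lra.
Qed.

Lemma power_iter_step t i : Rabs (power_iter t.+1 i - power_iter t i) <=
  INR #|T| * cmax / (kap * cmin) * (1 - kap) ^ t.
Proof.
set u := power_iter t; have u_gt0 l : 0 < u l by apply: power_iter_gt0.
have u_j0 : u j0 = 1 by apply: power_iter_j0.
have uC0 : cmin <= vecmul u j0.
  have [lo _] := vecmul_bounds j0 (fun l => Rlt_le _ _ (u_gt0 l)).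
  have := rsum_ge_term j0 (fun l => Rlt_le _ _ (u_gt0 l)); rewrite u_j0; nra.
have -> : power_iter t.+1 i - u i = u i * (growth_ratio t i - growth_ratio t j0) * / vecmul u j0.
  by rewrite /growth_ratio /= -/u u_j0; have := u_gt0 i => ?; field; lra.
have osc : Rabs (growth_ratio t i - growth_ratio t j0) <= INR #|T| * cmax * (1 - kap) ^ t.
  by apply: Rabs_le; have := growth_ratio_osc t i j0; have := growth_ratio_osc t j0 i; lra.
have [_ u_le] : kap <= u i <= / kap := power_iter_bounds t i; have ui := u_gt0 i.
have inv_le : / vecmul u j0 <= / cmin by apply: Rinv_le_contravar.
have inv_gt0 : 0 < / vecmul u j0 by apply: Rinv_0_lt_compat; lra.
rewrite !Rabs_mult (Rabs_right (u i)) ?(Rabs_right (/ _)); try (apply: Rle_ge; lra).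
apply: (Rle_trans _ (/ kap * (INR #|T| * cmax * (1 - kap) ^ t) * / cmin)); last first.
  by right; field; lra.
apply: Rmult_le_compat; [|lra| |exact: inv_le].
  by apply: Rmult_le_pos; [lra | apply: Rabs_pos].
by apply: Rmult_le_compat; [lra | apply: Rabs_pos | lra | exact: osc].
Qed.

Lemma positive_eigvec : exists y mu, (forall i, 0 < y i) /\ forall j, vecmul y j = mu * y j.
Proof.
have q01 : 0 <= 1 - kap < 1 by lra.
pose ylim i := proj1_sig (cv_geometric_increments q01 (fun t => power_iter_step t i)).
have cv i : Un_cv (fun t => power_iter t i) (ylim i).
  exact: proj2_sig (cv_geometric_increments q01 (fun t => power_iter_step t i)).
have ylim_gt0 i : 0 < ylim i.
  have := Rle_cv_lim (fun t => proj1 (power_iter_bounds t i)) (cv_const kap) (cv i).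
  lra.
exists ylim, (vecmul ylim j0); split=> // j.
have cv_num : Un_cv (fun t => vecmul (power_iter t) j) (vecmul ylim j) by apply: cv_rsum.
have cv_prod : Un_cv (fun t => vecmul (power_iter t) j) (ylim j * vecmul ylim j0).
  apply: (Un_cv_ext (fun t => power_iter t.+1 j * vecmul (power_iter t) j0)).
    move=> t /=; have : 0 < vecmul (power_iter t) j0 by apply/vecmul_gt0/power_iter_gt0.
    by move=> ?; field; lra.
  apply: CV_mult; last exact: cv_rsum.
  by move=> eps /(cv j) [N HN]; exists N => t Ht; apply: HN; lia.
by rewrite (UL_sequence _ _ _ cv_num cv_prod); ring.
Qed.
End PositiveMatrix.

Lemma positive_matrix_eigvec (T : finType) (j0 : T) (C : T -> T -> R) :
  (forall i j, 0 < C i j) ->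
  exists y mu, (forall i, 0 < y i) /\ forall j, vecmul C y j = mu * y j.
Proof.
move=> C_gt0; have [pm C_min] := ex_argmin (j0, j0) (fun p : T * T => C p.1 p.2).
have [pM C_max] := ex_argmax (j0, j0) (fun p : T * T => C p.1 p.2).
apply: (positive_eigvec j0 (C_gt0 pm.1 pm.2)) => i j.
exact: (conj (C_min (i, j)) (C_max (i, j))).
Qed.

Lemma positive_eigvec_unique (T : finType) (j0 : T) (C : T -> T -> R) (y x : T -> R) mu :
  (forall i j, 0 < C i j) -> (forall i, 0 < y i) -> (forall j, vecmul C y j = mu * y j) ->
  (forall i, 0 <= x i) -> (forall j, vecmul C x j = mu * x j) ->
  exists c, forall j, x j = c * y j.
Proof.
move=> C_gt0 y_gt0 yeig x_ge0 xeig.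
have [j1 j1_min] := ex_argmin j0 (fun j => x j / y j).
set c := x j1 / y j1; exists c; pose z j := x j - c * y j.
have z_ge0 j : 0 <= z j.
  have := j1_min j; rewrite -/c /z => cle; have := y_gt0 j => yj.
  have : c * y j <= x j / y j * y j by apply: Rmult_le_compat_r; lra.
  by rewrite (_ : x j / y j * y j = x j); [lra | field; lra].
have z_j1 : z j1 = 0 by rewrite /z /c; field; have := y_gt0 j1; lra.
have zeig : vecmul C z j1 = mu * z j1.
  have -> : vecmul C z j1 = vecmul C x j1 - c * vecmul C y j1.
    by rewrite -vecmulZ /vecmul -rsumB; apply: eq_rsum => j; rewrite /z; ring.
  by rewrite xeig yeig /z; ring.
move=> j; apply: NNPP => ne.
have zj : 0 < z j by have := z_ge0 j; rewrite /z; move=> ?; apply: Rnot_le_lt => ?; apply: ne; lra.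
have : 0 < vecmul C z j1.
  apply: (rsum_gt0 (i := j)); last by apply: Rmult_lt_0_compat.
  by move=> l; apply: Rmult_le_pos => //; apply: Rlt_le.
by rewrite zeig z_j1; lra.
Qed.

Definition matmul (T : finType) (A B : T -> T -> R) i k := rsum (fun j => A i j * B j k).

Lemma vecmulA (T : finType) (A B : T -> T -> R) u k :
  vecmul B (vecmul A u) k = vecmul (matmul A B) u k.
Proof.
rewrite /vecmul /matmul (eq_rsum (G := fun j => rsum (fun i => u i * (A i j * B j k)))).
  by rewrite rsum_swap; apply: eq_rsum => i; rewrite rsumMl.
by move=> j; rewrite -rsumMr; apply: eq_rsum => i; ring.
Qed.

Section Irreducible.
Variables (T : finType) (A : T -> T -> R).
Hypothesis A_ge0 : forall a b, 0 <= A a b.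

Lemma mpow_ge0 N i j : 0 <= mpow A N i j.
Proof.
elim: N i => [|N IH] i /=; first by case: (i == j); lra.
by apply: rsum_ge0 => l; apply: Rmult_le_pos.
Qed.

Lemma mpowSr N i j : mpow A N.+1 i j = rsum (fun l => mpow A N i l * A l j).
Proof.
elim: N i => [|N IH] i.
  rewrite /= (eq_rsum (G := fun l => if l == j then A i l else 0)) => [|l]; last first.
    by case: (l == j); ring.
  rewrite rsum_delta (eq_rsum (G := fun l => if l == i then A l j else 0)) ?rsum_delta //.
  by move=> l; rewrite eq_sym; case: (l == i); ring.
have -> : mpow A N.+2 i j = rsum (fun l => A i l * mpow A N.+1 l j) by [].
rewrite (eq_rsum (G := fun l => rsum (fun m => A i l * mpow A N l m * A m j))).
  by rewrite rsum_swap; apply: eq_rsum => m; rewrite rsumMr.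
by move=> l; rewrite IH -rsumMl; apply: eq_rsum => m; ring.
Qed.

Definition mpow_sum K i j := rsum (fun m : 'I_K.+1 => mpow A m i j).

Lemma mpow_sum_gt0 : irreducible A -> exists K, forall i j, 0 < mpow_sum K i j.
Proof.
move=> A_irr; pose P (p : T * T) (N : nat) := leq 1 N /\ 0 < mpow A N p.1 p.2.
pose Nf p := epsilon (inhabits 0%nat) (P p).
have Nf_spec p : P p (Nf p) by apply: epsilon_spec; apply: A_irr.
exists (\max_(p : T * T) Nf p) => i j.
have lt_K : leq (Nf (i, j)).+1 (\max_(p : T * T) Nf p).+1 by rewrite ltnS; apply: (leq_bigmax (i, j)).
apply: (rsum_gt0 (i := Ordinal lt_K)) => [m|]; first exact: mpow_ge0.
exact: (proj2 (Nf_spec (i, j))).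
Qed.

Lemma matmul_mpow_sum_comm K i j : matmul A (mpow_sum K) i j = matmul (mpow_sum K) A i j.
Proof.
rewrite /matmul /mpow_sum.
rewrite (eq_rsum (G := fun l => rsum (fun m : 'I_K.+1 => A i l * mpow A m l j))) => [|l]; last first.
  by rewrite rsumMl.
rewrite [RHS](eq_rsum (G := fun l => rsum (fun m : 'I_K.+1 => mpow A m i l * A l j))) => [|l]; last first.
  by rewrite rsumMr.
by rewrite rsum_swap [RHS]rsum_swap; apply: eq_rsum => m; rewrite -mpowSr.
Qed.

(* [S = \sum_(m <= K) A^m] is positive and commutes with [A], so [A] maps the
   positive eigenvector of [S] to a nonnegative eigenvector of [S], i.e. to a
   multiple of itself. *)
Lemma PF_exists (j0 : T) : irreducible A -> exists lam v, is_PF A lam v.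
Proof.
move=> A_irr; have [K S_gt0] := mpow_sum_gt0 A_irr; set S := mpow_sum K in S_gt0.
have [y [mu [y_gt0 yeig]]] := positive_matrix_eigvec j0 S_gt0.
pose x := vecmul A y.
have x_ge0 j : 0 <= x j by apply: rsum_ge0 => i; apply: Rmult_le_pos => //; apply: Rlt_le.
have xeig k : vecmul S x k = mu * x k.
  rewrite /x vecmulA (_ : vecmul (matmul A S) y k = vecmul (matmul S A) y k); last first.
    by apply: eq_rsum => i; rewrite matmul_mpow_sum_comm.
  by rewrite -vecmulA -vecmulZ; apply: eq_rsum => j; rewrite yeig.
have [l x_l] : exists l, 0 < x l.
  have [[|N] [//= _ /rsum_gt0_ex [l Hl]]] := A_irr j0 j0.
  have A_l : 0 < A j0 l by have := mpow_ge0 N l j0; have := A_ge0 j0 l; nra.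
  exists l; apply: (Rlt_le_trans _ (y j0 * A j0 l)); first exact: Rmult_lt_0_compat.
  by apply: (rsum_ge_term (F := fun i => y i * A i l)) => i; apply: Rmult_le_pos => //; apply: Rlt_le.
have [c xc] := positive_eigvec_unique j0 S_gt0 y_gt0 yeig x_ge0 xeig.
have [j2 j2_min] := ex_argmin j0 y; have y2 := y_gt0 j2.
exists c, (fun i => y i / y j2); split; first by have := xc l; have := y_gt0 l; nra.
split=> [i|]; first by apply: Rle_divr => //; rewrite Rmult_1_l.
split=> [|j]; first by exists j2; field; lra.
rewrite (eq_rsum (G := fun i => / y j2 * (y i * A i j))) => [|i]; last by rewrite /Rdiv; ring.
by rewrite rsumMl -/(vecmul A y j) -/(x j) xc /Rdiv; ring.
Qed.

Lemma PF_vecP (j0 : T) : irreducible A -> is_PF A (PF_eig A) (PF_vec A).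
Proof.
move=> A_irr; have [lam [v PF]] := PF_exists j0 A_irr.
exact: (epsilon_spec _ (fun p => is_PF A p.1 p.2) (ex_intro _ (lam, v) PF)).
Qed.
End Irreducible.

Lemma irreducible_support (T : finType) (A B : T -> T -> R) :
  (forall a b, 0 <= A a b) -> (forall a b, 0 <= B a b) ->
  (forall a b, 0 < A a b -> 0 < B a b) -> irreducible A -> irreducible B.
Proof.
move=> A_ge0 B_ge0 AB A_irr i j; have [N [N_ge1 pos]] := A_irr i j; exists N; split=> //.
elim: N i j {N_ge1} pos => [//|N IH] i j /= /rsum_gt0_ex [l Hl].
apply: (rsum_gt0 (i := l)) => [m|]; first by apply: Rmult_le_pos; [|apply: mpow_ge0].
have := A_ge0 i l; have := mpow_ge0 A_ge0 N l j => ? ?.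
by apply: Rmult_lt_0_compat; [apply: AB | apply: IH]; nra.
Qed.

Lemma exp_convex a x y : 0 < a < 1 -> exp (a * x + (1 - a) * y) <= a * exp x + (1 - a) * exp y.
Proof.
move=> a01; set m := a * x + (1 - a) * y.
have tangent u : exp m * (1 + (u - m)) <= exp u.
  have -> : exp u = exp m * exp (u - m) by rewrite -exp_plus; congr exp; ring.
  by apply: Rmult_le_compat_l; [apply/Rlt_le/exp_pos | apply: exp_ineq1_le].
have := tangent x; have := tangent y; rewrite /m; nra.
Qed.

Lemma young_rpow0 f g F G a : 0 <= f -> 0 <= g -> 0 < F -> 0 < G -> 0 < a < 1 ->
  rpow0 f a * rpow0 g (1 - a) <=
  rpow0 F a * rpow0 G (1 - a) * (a * (f / F) + (1 - a) * (g / G)).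
Proof.
move=> f_ge0 g_ge0 F_gt0 G_gt0 a01.
have K_gt0 : 0 < rpow0 F a * rpow0 G (1 - a) by apply: Rmult_lt_0_compat; apply: rpow0_gt0.
have avg_ge0 : 0 <= a * (f / F) + (1 - a) * (g / G).
  have fF : 0 <= f / F by apply: Rmult_le_pos => //; apply/Rlt_le/Rinv_0_lt_compat.
  have gG : 0 <= g / G by apply: Rmult_le_pos => //; apply/Rlt_le/Rinv_0_lt_compat.
  nra.
have [f_gt0 | f0] := Rle_lt_or_eq_dec _ _ f_ge0; last first.
  rewrite -f0 in avg_ge0 *; rewrite (rpow0_le0 a (Rle_refl 0)) Rmult_0_l.
  exact: Rmult_le_pos (Rlt_le _ _ K_gt0) avg_ge0.
have [g_gt0 | g0] := Rle_lt_or_eq_dec _ _ g_ge0; last first.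
  rewrite -g0 in avg_ge0 *; rewrite (rpow0_le0 (1 - a) (Rle_refl 0)) Rmult_0_r.
  exact: Rmult_le_pos (Rlt_le _ _ K_gt0) avg_ge0.
have fF := Rdiv_lt_0_compat _ _ f_gt0 F_gt0; have gG := Rdiv_lt_0_compat _ _ g_gt0 G_gt0.
have -> : rpow0 f a * rpow0 g (1 - a) = rpow0 F a * rpow0 G (1 - a) *
            exp (a * ln (f / F) + (1 - a) * ln (g / G)).
  by rewrite !rpow0E // -!exp_plus !ln_div //; congr exp; ring.
apply: Rmult_le_compat_l; first lra.
by have := exp_convex (ln (f / F)) (ln (g / G)) a01; rewrite !exp_ln.
Qed.

Lemma holder (I : finType) (f g : I -> R) a :
  (forall i, 0 <= f i) -> (forall i, 0 <= g i) -> 0 < a < 1 ->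
  rsum (fun i => rpow0 (f i) a * rpow0 (g i) (1 - a)) <= rpow0 (rsum f) a * rpow0 (rsum g) (1 - a).
Proof.
move=> f_ge0 g_ge0 a01.
have RHS_ge0 : 0 <= rpow0 (rsum f) a * rpow0 (rsum g) (1 - a).
  by apply: Rmult_le_pos; apply: rpow0_ge0.
have zero_sum (h : I -> R) i : (forall i, 0 <= h i) -> rsum h = 0 -> h i = 0.
  by move=> h_ge0 S0; apply: Rle_antisym; [rewrite -S0; apply: rsum_ge_term | apply: h_ge0].
have [F_gt0 | F0] := Rle_lt_or_eq_dec _ _ (rsum_ge0 f_ge0); last first.
  by rewrite (eq_rsum (G := fun _ => 0)) ?rsum0 // => i; rewrite zero_sum // (@rpow0_le0 0); lra.
have [G_gt0 | G0] := Rle_lt_or_eq_dec _ _ (rsum_ge0 g_ge0); last first.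
  by rewrite (eq_rsum (G := fun _ => 0)) ?rsum0 // => i; rewrite (zero_sum g) // (@rpow0_le0 0); lra.
apply: (Rle_trans _ _ _ (rsum_le (fun i => young_rpow0 (f_ge0 i) (g_ge0 i) F_gt0 G_gt0 a01))).
rewrite rsumMl rsumD.
rewrite (eq_rsum (F := fun i => a * (f i / rsum f)) (G := fun i => a / rsum f * f i)) => [|i]; last first.
  by rewrite /Rdiv; ring.
rewrite (eq_rsum (F := fun i => (1 - a) * (g i / rsum g)) (G := fun i => (1 - a) / rsum g * g i)) => [|i]; last first.
  by rewrite /Rdiv; ring.
by rewrite !rsumMl; right; field; lra.
Qed.

Section Noise.
Variables (X : finZmodType) (Z : finType).

Lemma noise_size n (xt : n.-tuple X) (y : n.-tuple (X * Z)) : size (noise xt y) == n.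
Proof. by rewrite /noise size_map size_zip !size_tuple minnn. Qed.

Definition noise_tuple n (xt : n.-tuple X) (y : n.-tuple (X * Z)) : n.-tuple (X * Z) :=
  Tuple (noise_size xt y).

Lemma noise_inj (xt : seq X) (y1 y2 : seq (X * Z)) :
  size y1 = size xt -> size y2 = size xt -> noise xt y1 = noise xt y2 -> y1 = y2.
Proof.
elim: xt y1 y2 => [|x xt IH] [|[a1 a2] y1] [|[b1 b2] y2] //= [s1] [s2].
by rewrite /noise /= => -[/GRing.addIr -> -> /(IH _ _ s1 s2) ->].
Qed.

Lemma noise_tuple_inj n (xt : n.-tuple X) : injective (noise_tuple xt).
Proof.
move=> y1 y2 /(congr1 val) /= E; apply: val_inj.
by apply: (noise_inj (xt := xt)); rewrite ?size_tuple.
Qed.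

Lemma map_snd_noise (xt : seq X) (y : seq (X * Z)) :
  size xt = size y -> map snd (noise xt y) = map snd y.
Proof. by elim: xt y => [|x xt IH] [|a y] //= [/IH]; rewrite /noise => /= ->. Qed.
End Noise.

Lemma mprob_map_snd (A B : Type) (w : B -> R) (W : B -> B -> R) (t : seq (A * B)) :
  mprob w W (map snd t) = mprob (fun y : A * B => w y.2) (fun a b : A * B => W a.2 b.2) t.
Proof.
case: t => [|y t] //=; congr (_ * _).
by elim: t y => [|y' t IH] y //=; rewrite IH.
Qed.

Section OutputMarginal.
Variables (X : finZmodType) (Z : finType) (Wc : (X * Z)%type -> (X * Z)%type -> R)
          (PXZ1 : (X * Z)%type -> R).
Hypotheses (sWc : stochastic Wc) (dPXZ : distribution PXZ1).

Lemma WcZ_ge0 z z' : 0 <= WcZ Wc z z'.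
Proof. by apply: rsum_ge0 => x; apply: (proj1 sWc). Qed.

Lemma PZ1_ge0 z : 0 <= PZ1 PXZ1 z.
Proof. by apply: rsum_ge0 => x; apply: (proj1 dPXZ). Qed.

Lemma WcZ_sum z' : rsum (fun z => WcZ Wc z z') = 1.
Proof. by rewrite /WcZ rsum_swap -(proj2 sWc (GRing.zero, z')) rsum_pair. Qed.

Lemma PZ1_sum : rsum (PZ1 PXZ1) = 1.
Proof. by rewrite /PZ1 rsum_swap -(proj2 dPXZ) rsum_pair. Qed.

(* The Z-marginal chain ignores the X-components, each of which then contributes a factor |X|. *)
Lemma rsum_mprob_marginal n :
  rsum (fun y : n.+1.-tuple (X * Z) => mprob (PZ1 PXZ1) (WcZ Wc) (map snd y)) = INR #|X| ^ n.+1.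
Proof.
have mass N p : chain_mass (fun a b : X * Z => WcZ Wc a.2 b.2) N p = INR #|X| ^ N.
  elim: N p => [|N IH] p; first by rewrite chain_mass0.
  rewrite chain_massS (eq_rsum (G := fun y => INR #|X| ^ N * WcZ Wc y.2 p.2)) => [|y]; last first.
    by rewrite IH /=; ring.
  rewrite rsumMl rsum_pair (eq_rsum (G := fun _ => 1)) => [|x]; last exact: WcZ_sum.
  by rewrite rsum_const /=; ring.
rewrite (eq_rsum (G := fun y : n.+1.-tuple (X * Z) => mprob (fun y : X * Z => PZ1 PXZ1 y.2)
                                  (fun a b : X * Z => WcZ Wc a.2 b.2) y)) => [|y]; last first.
  exact: mprob_map_snd.
rewrite rsum_mprob (eq_rsum (G := fun y : X * Z => INR #|X| ^ n * PZ1 PXZ1 y.2)) => [|y]; last first.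
  by rewrite mass; ring.
rewrite rsumMl rsum_pair (eq_rsum (G := fun _ => 1)) => [|x]; last exact: PZ1_sum.
by rewrite rsum_const /=; ring.
Qed.
End OutputMarginal.

Lemma PF_mass_bounds (T : finType) (A : T -> T -> R) (w : T -> R) N :
  (forall a b, 0 <= A a b) -> irreducible A -> (forall a, 0 <= w a) -> (exists x, 0 < w x) ->
  let S := rsum (fun t : N.+1.-tuple T => mprob w A t) in
  let V := rsum (fun x => PF_vec A x * w x) in
  0 < S /\ ln S <= INR N * ln (PF_eig A) + ln V /\
  INR N * ln (PF_eig A) + ln V - ln (rmax (PF_vec A)) <= ln S.
Proof.
move=> A_ge0 A_irr w_ge0 [x0 w_x0]; have PF := PF_vecP A_ge0 x0 A_irr.
apply: mprob_mass_bounds => //; have [_ [v_ge1 _]] := PF.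
apply: (rsum_gt0 (i := x0)) => [x|]; last by have := v_ge1 x0; nra.
by have := v_ge1 x; have := w_ge0 x; nra.
Qed.

Lemma source_tilt_bounds (M : finType) (Ws : M -> M -> R) (PM1 : M -> R) k th :
  stochastic Ws -> irreducible Ws -> distribution PM1 ->
  let S := rsum (fun mk : k.+1.-tuple M => rpow0 (mprob PM1 Ws mk) (1 - th)) in
  0 < S /\ ln S <= INR k * thHs Ws th + dbar_s Ws PM1 th /\
  INR k * thHs Ws th + dund_s Ws PM1 th <= ln S.
Proof.
move=> [Ws_ge0 _] Ws_irr [P_ge0 P_sum] S.
have As_ge0 a b : 0 <= As Ws th a b by apply: rpow0_ge0.
have As_irr : irreducible (As Ws th).
  by apply: (irreducible_support Ws_ge0) => // a b; apply: rpow0_gt0.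
have [m0 P_m0] : exists m, 0 < PM1 m by apply: rsum_gt0_ex; lra.
have -> : S = rsum (fun t : k.+1.-tuple M => mprob (ws PM1 th) (As Ws th) t).
  by apply: eq_rsum => t; rewrite mprob_rpow0.
have [S_gt0 [up lo]] := PF_mass_bounds k As_ge0 As_irr (w := ws PM1 th) (fun a => rpow0_ge0 _ _)
  (ex_intro _ m0 (rpow0_gt0 _ P_m0)).
by rewrite /thHs /dund_s /dbar_s; split; lra.
Qed.

Lemma channel_tilt_bounds (X : finZmodType) (Z : finType) (Wc : (X * Z)%type -> (X * Z)%type -> R)
  (PXZ1 : (X * Z)%type -> R) n th :
  stochastic Wc -> irreducible Wc -> distribution PXZ1 -> assumption1 Wc ->
  let S := rsum (fun y : n.+1.-tuple (X * Z) =>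
     rpow0 (mprob PXZ1 Wc y) (1 - th) * rpow0 (mprob (PZ1 PXZ1) (WcZ Wc) (map snd y)) th) in
  0 < S /\ ln S <= INR n * thHc Wc th + dbar_c Wc PXZ1 th /\
  INR n * thHc Wc th + dund_c Wc PXZ1 th <= ln S.
Proof.
move=> sWc Wc_irr dPXZ A1 S; have [Wc_ge0 _] := sWc; have [P_ge0 P_sum] := dPXZ.
have Ac_ge0 a b : 0 <= Ac Wc th a b by apply: Rmult_le_pos; apply: rpow0_ge0.
(* Assumption 1 makes [W_{c,Z}(z|z')] dominate every [W_c((x,z)|(x',z'))]. *)
have Ac_irr : irreducible (Ac Wc th).
  apply: (irreducible_support Wc_ge0) => // -[x z] [x' z'] W_pos.
  apply: Rmult_lt_0_compat; apply: rpow0_gt0 => //.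
  by rewrite /WcZ (A1 _ _ _ x'); apply: (rsum_gt0 (i := x)) => // x1; apply: Wc_ge0.
have [[x0 z0] P_y0] : exists y, 0 < PXZ1 y by apply: rsum_gt0_ex; lra.
have -> : S = rsum (fun t : n.+1.-tuple (X * Z) => mprob (wc PXZ1 th) (Ac Wc th) t).
  apply: eq_rsum => t; rewrite (mprob_rpow0 _ _ P_ge0 Wc_ge0).
  rewrite (mprob_rpow0 _ _ (PZ1_ge0 dPXZ) (WcZ_ge0 sWc)).
  by rewrite mprob_map_snd -mprobM.
have wc_pos : 0 < wc PXZ1 th (x0, z0).
  apply: Rmult_lt_0_compat; apply: rpow0_gt0 => //.
  by apply: (rsum_gt0 (i := x0)).
have [S_gt0 [up lo]] := PF_mass_bounds n Ac_ge0 Ac_irr (w := wc PXZ1 th)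
  (fun a => Rmult_le_pos _ _ (rpow0_ge0 _ _) (rpow0_ge0 _ _)) (ex_intro _ _ wc_pos).
split=> //; split; first exact: up.
by rewrite /dund_c; apply: Rle_trans lo; right; rewrite /thHc /dbar_c; ring.
Qed.

Section Tilted.
Variables (P : finType) (q z ind : P -> R).
Hypotheses (q_ge0 : forall p, 0 <= q p) (z_ge0 : forall p, 0 <= z p)
           (ind01 : forall p, ind p = 0 \/ ind p = 1).

Definition tilt th p := rpow0 (q p) (1 - th) * rpow0 (z p) th.

Lemma tilt_ge0 th p : 0 <= tilt th p.
Proof. by apply: Rmult_le_pos; apply: rpow0_ge0. Qed.

Lemma tiltE th p : 0 < q p -> 0 < z p -> tilt th p = exp ((1 - th) * ln (q p) + th * ln (z p)).
Proof. by move=> q_gt0 z_gt0; rewrite /tilt !rpow0E // exp_plus. Qed.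

Lemma tilt_gt0_inv th p : 0 < tilt th p -> 0 < q p /\ 0 < z p.
Proof.
have := rpow0_ge0 (q p) (1 - th); have := rpow0_ge0 (z p) th => z_ge q_ge pos.
by split; [apply: (@rpow0_gt0_base _ (1 - th)) | apply: (@rpow0_gt0_base _ th)]; rewrite /tilt in pos; nra.
Qed.

Lemma ind_ge0 p : 0 <= ind p.
Proof. by case: (ind01 p) => ->; lra. Qed.

(* The tilt at [rho] is the geometric mean, with weights [1/(1+s)] and [s/(1+s)],
   of the tilt at [rho (1+s)] and of [q]. *)
Lemma tilt_holder rho s : 0 < s ->
  rsum (fun p => ind p * tilt rho p) <=
  rpow0 (rsum (tilt (rho * (1 + s)))) (/ (1 + s)) *
  rpow0 (rsum (fun p => ind p * q p)) (1 - / (1 + s)).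
Proof.
move=> s_gt0; set a := / (1 + s).
have a01 : 0 < a < 1.
  split; first by apply: Rinv_0_lt_compat; lra.
  by rewrite /a -Rinv_1; apply: Rinv_lt_contravar; lra.
have split_tilt p : ind p * tilt rho p <=
    rpow0 (ind p * tilt (rho * (1 + s)) p) a * rpow0 (ind p * q p) (1 - a).
  have RHS_ge0 c : 0 <= rpow0 (c * tilt (rho * (1 + s)) p) a * rpow0 (c * q p) (1 - a).
    by apply: Rmult_le_pos; apply: rpow0_ge0.
  case: (ind01 p) => ->; first by rewrite Rmult_0_l; apply: RHS_ge0.
  have [pos | <-] := Rle_lt_or_eq_dec _ _ (tilt_ge0 rho p); last by rewrite Rmult_0_r; apply: RHS_ge0.
  rewrite !Rmult_1_l.
  have [q_gt0 z_gt0] := tilt_gt0_inv pos.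
  right; rewrite !tiltE // !rpow0E ?ln_exp -?exp_plus //; try exact: exp_pos.
  by congr exp; rewrite /a; field; lra.
apply: (Rle_trans _ _ _ (rsum_le split_tilt)).
apply: (Rle_trans _ _ _ (@holder _ _ _ a _ _ a01));
  try by move=> p; apply: Rmult_le_pos; [apply: ind_ge0 | apply: q_ge0 || apply: tilt_ge0].
apply: Rmult_le_compat_r; first exact: rpow0_ge0.
apply: rpow0_le; try lra.
  by apply: rsum_ge0 => p; apply: Rmult_le_pos; [apply: ind_ge0 | apply: tilt_ge0].
apply: rsum_le => p; have := tilt_ge0 (rho * (1 + s)) p.
by case: (ind01 p) => ->; lra.
Qed.

(* Where the tilt at [rho] exceeds [c z], the ratio [q / z] is so large that the
   tilt at [th0] dominates it. *)
Lemma tilt_threshold th0 rho c p : th0 < rho < 1 -> 0 < c ->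
  tilt rho p <= c * z p + exp (- ((rho - th0) / (1 - rho)) * ln c) * tilt th0 p.
Proof.
move=> [th0_rho rho1] c_gt0; set t := (rho - th0) / (1 - rho).
have t_ge0 : 0 <= t by apply: Rmult_le_pos; [lra | apply/Rlt_le/Rinv_0_lt_compat; lra].
have e_ge0 := Rmult_le_pos _ _ (Rlt_le _ _ (exp_pos (- t * ln c))) (tilt_ge0 th0 p).
have cz_ge0 : 0 <= c * z p by apply: Rmult_le_pos; [lra | apply: z_ge0].
have [small | /Rnot_le_lt big] := Rle_dec (tilt rho p) (c * z p); first lra.
have [q_gt0 z_gt0] : 0 < q p /\ 0 < z p by apply: (@tilt_gt0_inv rho); lra.
set L := (1 - rho) * ln (q p) + rho * ln (z p).
have L_big : ln c + ln (z p) < L.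
  rewrite -ln_mult // /L -(ln_exp ((1 - rho) * ln (q p) + rho * ln (z p))) -tiltE //.
  by apply: ln_increasing; [apply: Rmult_lt_0_compat | ].
have -> : exp (- t * ln c) * tilt th0 p = exp (L + t * (L - ln c - ln (z p))).
  by rewrite tiltE // -exp_plus /L /t; congr exp; field; lra.
have : exp L <= exp (L + t * (L - ln c - ln (z p))) by apply: exp_le; nra.
by rewrite tiltE // -/L; lra.
Qed.

Lemma tilt_correct_sum th0 rho c : th0 < rho < 1 -> 0 < c ->
  rsum (fun p => (1 - ind p) * tilt rho p) <=
  c * rsum (fun p => (1 - ind p) * z p) +
  exp (- ((rho - th0) / (1 - rho)) * ln c) * rsum (tilt th0).
Proof.
move=> rho_bd c_gt0; rewrite -!rsumMl -rsumD; apply: rsum_le => p.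
have := tilt_threshold p rho_bd c_gt0.
have := Rmult_le_pos _ _ (Rlt_le _ _ (exp_pos (- ((rho - th0) / (1 - rho)) * ln c))) (tilt_ge0 th0 p).
by case: (ind01 p) => ->; nra.
Qed.
End Tilted.

Section BlockCode.
Variables (M : finType) (Ws : M -> M -> R) (PM1 : M -> R)
  (X : finZmodType) (Z : finType) (Wc : (X * Z)%type -> (X * Z)%type -> R)
  (PXZ1 : (X * Z)%type -> R) (k n : nat)
  (e : k.+1.-tuple M -> n.+1.-tuple X) (d : n.+1.-tuple (X * Z) -> k.+1.-tuple M).
Hypotheses (sWs : stochastic Ws) (Ws_irr : irreducible Ws) (dPM : distribution PM1)
  (sWc : stochastic Wc) (Wc_irr : irreducible Wc) (dPXZ : distribution PXZ1)
  (A1 : assumption1 Wc).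

Local Notation trial := (k.+1.-tuple M * n.+1.-tuple (X * Z))%type.

Definition joint (p : trial) := mprob PM1 Ws p.1 * mprob PXZ1 Wc (noise (e p.1) p.2).
Definition out_marg (p : trial) := mprob (PZ1 PXZ1) (WcZ Wc) (map snd p.2).
Definition err_ind (p : trial) := if d p.2 == p.1 then 0 else 1.

Let U := Ufun Ws Wc ((INR k.+1 - 1) / (INR n.+1 - 1)).
Let mass th := rsum (tilt joint out_marg th).

Lemma joint_ge0 p : 0 <= joint p.
Proof.
by apply: Rmult_le_pos; apply: mprob_ge0;
  [exact: (proj1 dPM) | exact: (proj1 sWs) | exact: (proj1 dPXZ) | exact: (proj1 sWc)].
Qed.

Lemma out_marg_ge0 p : 0 <= out_marg p.
Proof. by apply: mprob_ge0; [exact: PZ1_ge0 | exact: WcZ_ge0]. Qed.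

Lemma err_ind01 p : err_ind p = 0 \/ err_ind p = 1.
Proof. by rewrite /err_ind; case: (_ == _); [left | right]. Qed.

Lemma err_probE : err_prob Ws PM1 Wc PXZ1 e d = rsum (fun p => err_ind p * joint p).
Proof.
rewrite /err_prob rsum_pair; apply: eq_rsum => mk; rewrite -rsumMl; apply: eq_rsum => y.
by rewrite /err_ind /joint /=; ring.
Qed.

(* The decoder picks one message per output, so the correct trials weigh
   each output once. *)
Lemma correct_out_marg : rsum (fun p => (1 - err_ind p) * out_marg p) = INR #|X| ^ n.+1.
Proof.
rewrite rsum_pair rsum_swap -(rsum_mprob_marginal sWc dPXZ n); apply: eq_rsum => y.
rewrite (eq_rsum (G := fun mk => if mk == d y then out_marg (mk, y) else 0)) ?rsum_delta //.
by move=> mk; rewrite /err_ind /= eq_sym; case: (mk == d y); ring.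
Qed.

Lemma mass_factor th : mass th =
  rsum (fun mk : k.+1.-tuple M => rpow0 (mprob PM1 Ws mk) (1 - th)) *
  rsum (fun y : n.+1.-tuple (X * Z) =>
    rpow0 (mprob PXZ1 Wc y) (1 - th) * rpow0 (mprob (PZ1 PXZ1) (WcZ Wc) (map snd y)) th).
Proof.
rewrite /mass rsum_pair -rsumMr; apply: eq_rsum => mk; rewrite -rsumMl.
rewrite -[in RHS](rsum_reindex _ (noise_tuple_inj (xt := e mk))); apply: eq_rsum => y.
rewrite /tilt /joint /out_marg /= map_snd_noise ?size_tuple // rpow0M; first ring.
  by apply: mprob_ge0; [exact: (proj1 dPM) | exact: (proj1 sWs)].
by apply: mprob_ge0; [exact: (proj1 dPXZ) | exact: (proj1 sWc)].
Qed.

Hypothesis n_gt0 : leq 1 n.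

Lemma mass_bounds th : 0 < mass th /\
  ln (mass th) <= (INR n.+1 - 1) * U th + (dbar_s Ws PM1 th + dbar_c Wc PXZ1 th) /\
  (INR n.+1 - 1) * U th + (dund_s Ws PM1 th + dund_c Wc PXZ1 th) <= ln (mass th).
Proof.
have [S_gt0 [S_up S_lo]] := source_tilt_bounds k th sWs Ws_irr dPM.
have [C_gt0 [C_up C_lo]] := channel_tilt_bounds n th sWc Wc_irr dPXZ A1.
have n_pos : 0 < INR n by apply: lt_0_INR; apply/leP.
have -> : (INR n.+1 - 1) * U th = INR k * thHs Ws th + INR n * thHc Wc th.
  by rewrite /U /Ufun !S_INR; field; lra.
by rewrite mass_factor ln_mult //; split; [apply: Rmult_lt_0_compat | split]; lra.
Qed.

Lemma correct_tilt_mass th0 dU0 rho : th0 < rho < 1 ->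
  (1 - th0) * dU0 + U th0 = ln (INR #|X|) ->
  let E := (INR n.+1 - 1) * ((rho - th0) * dU0 + U th0 - U rho)
           + delta2 Ws PM1 Wc PXZ1 (ln (INR #|X|)) th0 rho in
  rsum (fun p => (1 - err_ind p) * tilt joint out_marg rho p) <= 2 * (mass rho * exp E).
Proof.
move=> [th0_rho rho1] heq E.
have X_pos : 0 < INR #|X| by apply: lt_0_INR; apply/leP/card_gt0P; exists GRing.zero.
pose XN := INR #|X| ^ n.+1; have XN_gt0 : 0 < XN by apply: pow_lt.
have [m1_gt0 [_ lo1]] := mass_bounds rho; have [m0_gt0 [up0 _]] := mass_bounds th0.
(* The threshold [c] balances the two terms of [tilt_correct_sum]. *)
pose c := mass rho * exp E / XN.
have c_gt0 : 0 < c by apply: Rdiv_lt_0_compat => //; apply: Rmult_lt_0_compat => //; apply: exp_pos.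
have ln_c : ln c = ln (mass rho) + E - INR n.+1 * ln (INR #|X|).
  have eE := exp_pos E; have mE : 0 < mass rho * exp E by apply: Rmult_lt_0_compat.
  by rewrite /c ln_div // ln_mult // ln_exp /XN ln_pow.
pose t := (rho - th0) / (1 - rho).
have key : exp (- t * ln c) * mass th0 <= mass rho * exp E.
  rewrite -(exp_ln (mass th0)) // -(exp_ln (mass rho)) // -!exp_plus; apply: exp_le.
  apply: (Rmult_le_reg_l (1 - rho)); first lra.
  have -> : (1 - rho) * (- t * ln c + ln (mass th0)) =
            - (rho - th0) * ln c + (1 - rho) * ln (mass th0) by rewrite /t; field; lra.
  rewrite ln_c.
  have E_id : (1 - th0) * ((INR n.+1 - 1) * U rho + (dund_s Ws PM1 rho + dund_c Wc PXZ1 rho) + E)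
    = (1 - rho) * ((INR n.+1 - 1) * U th0 + (dbar_s Ws PM1 th0 + dbar_c Wc PXZ1 th0))
      + (rho - th0) * INR n.+1 * ln (INR #|X|).
    by rewrite /E /delta2 -heq; field; lra.
  have := Rmult_le_compat_l (1 - rho) _ _ ltac:(lra) up0.
  have := Rmult_le_compat_l (1 - th0) _ _ ltac:(lra) lo1.
  nra.
apply: (Rle_trans _ _ _ (tilt_correct_sum joint out_marg_ge0 err_ind01 (conj th0_rho rho1) c_gt0)).
rewrite correct_out_marg -/XN -/(mass th0) -/t (_ : c * XN = mass rho * exp E); first by lra.
by rewrite /c; field; lra.
Qed.

Lemma tilted_error_bound th0 dU0 rho s : 0 < s -> th0 < rho < 1 ->
  (1 - th0) * dU0 + U th0 = ln (INR #|X|) ->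
  let E := (INR n.+1 - 1) * ((rho - th0) * dU0 + U th0 - U rho)
           + delta2 Ws PM1 Wc PXZ1 (ln (INR #|X|)) th0 rho in
  mass rho * (1 - 2 * exp E) <=
  rpow0 (mass (rho * (1 + s))) (/ (1 + s)) * rpow0 (err_prob Ws PM1 Wc PXZ1 e d) (1 - / (1 + s)).
Proof.
move=> s_gt0 rho_bd heq E; rewrite err_probE.
apply: Rle_trans (tilt_holder out_marg joint_ge0 err_ind01 rho s_gt0).
have correct : rsum (fun p => (1 - err_ind p) * tilt joint out_marg rho p) <= 2 * (mass rho * exp E).
  exact: correct_tilt_mass.
have -> : rsum (fun p => err_ind p * tilt joint out_marg rho p) =
          mass rho - rsum (fun p => (1 - err_ind p) * tilt joint out_marg rho p).
  by rewrite /mass -rsumB; apply: eq_rsum => p; ring.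
lra.
Qed.
End BlockCode.

Lemma log_error_bound (N1 N2 Er L x y s : R) : 0 < s -> 0 < N1 -> 0 < L ->
  N1 * L <= rpow0 N2 (/ (1 + s)) * rpow0 Er (1 - / (1 + s)) -> x <= ln N1 -> ln N2 <= y ->
  exp ((1 + s) / s * (- y / (1 + s) + x + ln L)) <= Er.
Proof.
move=> s_gt0 N1_gt0 L_gt0 bound x_le y_ge; set a := / (1 + s) in bound *.
have a01 : 0 < a < 1.
  split; first by apply: Rinv_0_lt_compat; lra.
  by rewrite /a -Rinv_1; apply: Rinv_lt_contravar; lra.
have NL_gt0 : 0 < N1 * L by apply: Rmult_lt_0_compat.
have N2a := rpow0_ge0 N2 a; have Era := rpow0_ge0 Er (1 - a).
have N2_gt0 : 0 < N2 by apply: (@rpow0_gt0_base _ a); nra.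
have Er_gt0 : 0 < Er by apply: (@rpow0_gt0_base _ (1 - a)); nra.
have := ln_le NL_gt0 bound.
rewrite ln_mult // !rpow0E // ln_mult ?ln_exp; try exact: exp_pos.
move=> ln_bound; rewrite -(exp_ln Er) //; apply: exp_le.
have -> : (1 + s) / s * (- y / (1 + s) + x + ln L) = (x + ln L - a * y) / (1 - a).
  by rewrite /a; field; lra.
by apply: Rle_divl; [lra | nra].
Qed.

Theorem mainTheorem10
  (M : finType) (Ws : M -> M -> R) (PM1 : M -> R)
  (X : finZmodType) (Z : finType) (Wc : (X * Z)%type -> (X * Z)%type -> R)
  (PXZ1 : (X * Z)%type -> R) (k n : nat) (th0 dU0 : R) :
  stochastic Ws -> irreducible Ws -> aperiodic Ws -> distribution PM1 ->
  stochastic Wc -> irreducible Wc -> aperiodic Wc -> distribution PXZ1 ->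
  assumption1 Wc ->
  (leq 2 k : Prop) -> (leq 2 n : Prop) ->
  let U := Ufun Ws Wc ((INR k - 1) / (INR n - 1)) in
  let Rate := ln (INR #|X|) in
  th0 < 1 ->
  derivable_pt_lim U th0 dU0 ->
  (1 - th0) * dU0 + U th0 = Rate ->
  forall s rho : R, 0 < s -> th0 < rho < 1 ->
  let E := (INR n - 1) * ((rho - th0) * dU0 + U th0 - U rho)
           + delta2 Ws PM1 Wc PXZ1 Rate th0 rho in
  0 < 1 - 2 * exp E ->
  forall (e : k.-tuple M -> n.-tuple X) (d : n.-tuple (X * Z) -> k.-tuple M),
    exp ((1 + s) / s *
         (- (INR n - 1) * U (rho * (1 + s)) / (1 + s) + (INR n - 1) * U rho
          + delta1 Ws PM1 Wc PXZ1 s rho + ln (1 - 2 * exp E)))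
    <= err_prob Ws PM1 Wc PXZ1 e d.
Proof.
move=> sWs Ws_irr _ dPM sWc Wc_irr _ dPXZ A1 k_ge2 n_ge2 U Rate _ _ heq s rho s_gt0 rho_bd
  E E_gt0 e d.
have [k' Ek] : exists k', k = k'.+1 by clear -k_ge2; case: k k_ge2 => // k' _; exists k'.
have [n' En] : exists n', n = n'.+1 by clear -n_ge2; case: n n_ge2 => // n' _; exists n'.
subst k n.
have mass_bounds := mass_bounds e sWs Ws_irr dPM sWc Wc_irr dPXZ A1 n_ge2.
have [mass_gt0 [_ lo]] := mass_bounds rho.
have [_ [up _]] := mass_bounds (rho * (1 + s)).
have bound := tilted_error_bound e d sWs Ws_irr dPM sWc Wc_irr dPXZ A1 n_ge2 s_gt0 rho_bd heq.
apply: Rle_trans (log_error_bound s_gt0 mass_gt0 E_gt0 bound lo up).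
by right; congr exp; rewrite /delta1 /U (Rmult_comm (1 + s) rho); field; lra.
Qed.
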